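(* Consider the four-agent technology adoption game. There exists $\varepsilon_0>0$ such that for every $\varepsilon\in(0,\varepsilon_0)$ there is a nonempty open interval $J\subset(0,1)$ of costs such that for every $c\in J$: in the line network seeded via agent 1 there is an equilibrium in which the probability that all four agents adopt is strictly greater than the probability that all four adopt in every equilibrium of the cycle network seeded via agent 1.
   Context: Fix $\rho\in(0,1)$, $\varepsilon\in(0,1)$, agents $\{1,2,3,4\}$, state $\theta\in\{g,b\}$ with $\Pr(\theta=g)=\rho$. In state $b$ no messages are sent. In state $g$ messages travel along directed arcs, each transmission lost independently with probability $\varepsilon$, and an agent sends along her outgoing arcs only if she received at least one message. Line network seeded via 1: arcs $0\to1\to2\to3\to4$ (0 is the planner); each agent observes only whether she received a message. Cycle network (undirected cycle $1-2-3-4-1$) seeded via 1: arcs $0\to1$, $1\to2$, $1\to4$, $2\to3$, $4\to3$; agents $1,2,4$ observe whether they received a message; agent 3 observes which of the arcs $2\to3$, $4\to3$ delivered a message (types: only from 2, only from 4, from both, from neither). Technology adoption game with cost $c\in(0,1)$: each agent chooses $a_i\in\{0,1\}$ as a function of her information (possibly mixed); payoff $a_i(\mathbf 1[\theta=g\text{ and all four adopt}]-c)$; equilibria are Bayesian Nash equilibria. *)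

From HB Require Import structures.
From mathcomp Require Import all_boot all_order all_algebra.
From mathcomp Require Import reals.
Set Implicit Arguments. Unset Strict Implicit. Unset Printing Implicit Defensive.
Import Order.TTheory GRing.Theory Num.Theory.
Local Open Scope ring_scope.

(* Sample space for a network with n arcs: the state (true = g, false = b)
   and, for every arc, whether the transmission along it succeeds.
   Arc outcomes are drawn independently (success w.p. 1 - eps); in state b
   nothing is ever sent, so arc outcomes are then irrelevant. *)
Notation Omega n := (bool * {ffun 'I_n -> bool})%type.

Definition prob (R : realType) (n : nat) (rho eps : R) (w : Omega n) : R :=
  (if w.1 then rho else 1 - rho) *
  \prod_(a < n) (if w.2 a then 1 - eps else eps).

(* Agents 1,2,3,4 are represented by i : 'I_4 with value i-1.
   An agent's information (type) is an element of bool * bool.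
   Agents that only observe whether they received a message get the type
   (received?, false); in the cycle, agent 3 gets (from 2?, from 4?). *)
Definition info := (bool * bool)%type.

(* Line network: arcs 0->1, 1->2, 2->3, 3->4 are arcs 0,1,2,3.
   Agent k (0-based) receives iff state g and arcs 0..k all succeed. *)
Definition line_recv (w : Omega 4) (i : 'I_4) : bool :=
  w.1 && [forall a : 'I_4, (a <= i)%N ==> w.2 a].

Definition line_sig (w : Omega 4) (i : 'I_4) : info := (line_recv w i, false).

(* Cycle network: arcs 0->1, 1->2, 1->4, 2->3, 4->3 are arcs 0,1,2,3,4. *)
Definition cyc_r1 (w : Omega 5) : bool := w.1 && w.2 (@Ordinal 5 0 isT).
Definition cyc_r2 (w : Omega 5) : bool := cyc_r1 w && w.2 (@Ordinal 5 1 isT).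
Definition cyc_r4 (w : Omega 5) : bool := cyc_r1 w && w.2 (@Ordinal 5 2 isT).
Definition cyc_from2 (w : Omega 5) : bool := cyc_r2 w && w.2 (@Ordinal 5 3 isT).
Definition cyc_from4 (w : Omega 5) : bool := cyc_r4 w && w.2 (@Ordinal 5 4 isT).

Definition cycle_sig (w : Omega 5) (i : 'I_4) : info :=
  match nat_of_ord i with
  | 0 => (cyc_r1 w, false)
  | 1 => (cyc_r2 w, false)
  | 2 => (cyc_from2 w, cyc_from4 w)
  | _ => (cyc_r4 w, false)
  end.

(* Behavioural (possibly mixed) strategy profiles: probability of adopting
   as a function of the agent and her information. *)
Definition profile (R : realType) := 'I_4 -> info -> R.

Definition valid_strategy (R : realType) (f : info -> R) : Prop :=
  forall t, 0 <= f t <= 1.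

Definition upd (R : realType) (s : profile R) (i : 'I_4) (f : info -> R)
  : profile R := fun j => if j == i then f else s j.

Definition payoff (R : realType) (n : nat) (sig : Omega n -> 'I_4 -> info)
  (rho eps c : R) (s : profile R) (i : 'I_4) : R :=
  \sum_(w : Omega n) prob rho eps w * s i (sig w i) *
     ((if w.1 then \prod_(j < 4 | j != i) s j (sig w j) else 0) - c).

Definition is_BNE (R : realType) (n : nat) (sig : Omega n -> 'I_4 -> info)
  (rho eps c : R) (s : profile R) : Prop :=
  (forall i, valid_strategy (s i)) /\
  forall (i : 'I_4) (f : info -> R), valid_strategy f ->
    payoff sig rho eps c (upd s i f) i <= payoff sig rho eps c s i.

Definition prob_all_adopt (R : realType) (n : nat) (sig : Omega n -> 'I_4 -> info)
  (rho eps : R) (s : profile R) : R :=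
  \sum_(w : Omega n) prob rho eps w * \prod_(j < 4) s j (sig w j).

From HB Require Import structures.
From mathcomp Require Import all_boot all_order all_algebra.
From mathcomp Require Import reals.
From mathcomp Require Import ring lra.
Import Order.TTheory GRing.Theory Num.Theory.
Set Implicit Arguments. Unset Strict Implicit. Unset Printing Implicit Defensive.
Local Open Scope ring_scope.

(* Take costs (1-eps)^4 + 4 eps^2 < c < (1-eps)^3.  In the line, "adopt iff
   informed" is an equilibrium: an informed agent k expects all others to adopt
   with probability (1-eps)^(4-k) >= (1-eps)^3 > c, an uninformed agent 1, 2
   or 3 knows that agent 4 is uninformed as well, and an uninformed agent 4 is
   pivotal only with probability O(eps).  In the cycle, iterated deletion of
   types that never adopt leaves no adoption at all: uninformed agents 1, then
   2 and 4, never adopt; hence agent 3 never adopts on a single report; hence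
   an informed agent 1 needs the two reports of agent 3 to agree, which happens
   with probability (1-eps)^4 + (eps (2-eps))^2 < c, so agent 1 never adopts. *)

Local Notation agent1 := (@Ordinal 4 0 isT).
Local Notation agent2 := (@Ordinal 4 1 isT).
Local Notation agent3 := (@Ordinal 4 2 isT).
Local Notation agent4 := (@Ordinal 4 3 isT).

(** * Enumerating the sample space *)

Lemma sum_tuple_cons (R : nmodType) (T : finType) n (G : seq T -> R) :
  \sum_(t : n.+1.-tuple T) G t = \sum_x \sum_(t : n.-tuple T) G (x :: t).
Proof.
rewrite pair_big /= (reindex (fun p : T * n.-tuple T => [tuple of p.1 :: p.2])) //=.
exists (fun t => (thead t, behead_tuple t)) => [[x t]|t] _; last by rewrite -tuple_eta.
by congr pair; apply: val_inj.
Qed.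

Lemma sum_tuple0 (R : nmodType) (T : finType) (G : seq T -> R) :
  \sum_(t : 0.-tuple T) G t = G [::].
Proof. by rewrite (big_pred1 [tuple]) // => t; apply/esym/eqP; exact: tuple0. Qed.

Lemma sum_ffun_tuple (R : nmodType) (T : finType) n x0 (G : {ffun 'I_n -> T} -> R) :
  \sum_F G F = \sum_(t : n.-tuple T) G [ffun a : 'I_n => nth x0 t a].
Proof.
rewrite (reindex (fun t : n.-tuple T => [ffun a : 'I_n => nth x0 t a])) //.
exists (fun F : {ffun 'I_n -> T} => [tuple F a | a < n]) => [t|F] _.
  by apply: eq_from_tnth => a; rewrite tnth_mktuple ffunE (tnth_nth x0).
by apply/ffunP => a; rewrite !ffunE -(tnth_nth x0) tnth_mktuple.
Qed.

Section ArcExpectation.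
Variables (R : comPzRingType) (eps : R).

Definition arc_weight (b : bool) : R := if b then 1 - eps else eps.

(* Expectation over [n] independent arcs, each succeeding with probability
   [1 - eps]; being a fixpoint, it unfolds by [simpl] for a concrete [n]. *)
Fixpoint expect_arcs n (H : bitseq -> R) : R :=
  if n is n'.+1 then
    arc_weight true * expect_arcs n' (fun s => H (true :: s)) +
    arc_weight false * expect_arcs n' (fun s => H (false :: s))
  else H [::].

Lemma expect_arcsE n (H : bitseq -> R) :
  expect_arcs n H = \sum_(t : n.-tuple bool) \prod_(b <- t) arc_weight b * H t.
Proof.
pose G (H : bitseq -> R) (s : bitseq) := \prod_(b <- s) arc_weight b * H s.
elim: n H => [|n IHn] H /=; first by rewrite (sum_tuple0 (G H)) /G big_nil mul1r.
rewrite (sum_tuple_cons _ (G H)) big_bool /G.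
rewrite (IHn (fun s => H (true :: s))) (IHn (fun s => H (false :: s))) !mulr_sumr.
by congr (_ + _); apply: eq_bigr => t _; rewrite big_cons mulrA.
Qed.

End ArcExpectation.

Section Probability.
Variables (R : realType) (rho eps : R) (n : nat).
Hypotheses (rho01 : 0 <= rho <= 1) (eps01 : 0 <= eps <= 1).

Definition pr (E : pred (Omega n)) : R := \sum_w prob rho eps w * (E w)%:R.

Lemma prob_ge0 (w : Omega n) : 0 <= prob rho eps w.
Proof.
case/andP: rho01 => ? ?; case/andP: eps01 => ? ?.
rewrite /prob; apply: mulr_ge0; first by case: w.1; lra.
by apply: prodr_ge0 => a _; case: (w.2 a); lra.
Qed.

Lemma pr_ge0 E : 0 <= pr E.
Proof. by apply: sumr_ge0 => w _; rewrite mulr_ge0 ?prob_ge0 ?ler0n. Qed.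

Lemma eq_pr E F : E =1 F -> pr E = pr F.
Proof. by move=> EF; apply: eq_bigr => w _; rewrite EF. Qed.

Lemma pr_pred0 E : E =1 xpred0 -> pr E = 0.
Proof. by move=> E0; apply: big1 => w _; rewrite E0 mulr0. Qed.

Lemma sum_prob (G : Omega n -> R) :
  \sum_w prob rho eps w * G w =
  rho * expect_arcs eps n (fun s => G (true, [ffun a : 'I_n => nth false s a])) +
  (1 - rho) * expect_arcs eps n (fun s => G (false, [ffun a : 'I_n => nth false s a])).
Proof.
rewrite (eq_bigr (fun w => prob rho eps (w.1, w.2) * G (w.1, w.2))); last by case.
rewrite -(pair_bigA _ (fun th F => prob rho eps (th, F) * G (th, F))) big_bool /=.
rewrite !expect_arcsE !mulr_sumr !(sum_ffun_tuple false).
congr (_ + _); apply: eq_bigr => t _;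
  rewrite /prob (big_nth false) size_tuple big_mkord /= mulrA; congr (_ * _ * _);
  by apply: eq_bigr => a _; rewrite ffunE.
Qed.

End Probability.

Lemma prodr_le_factor (R : realDomainType) (I : finType) (P : pred I) (F : I -> R) k :
  (forall j, P j -> 0 <= F j <= 1) -> P k -> \prod_(j | P j) F j <= F k.
Proof.
move=> F01 Pk; rewrite (bigD1 k) //=; have /andP[F0 _] := F01 k Pk.
rewrite ler_piMr // prodr_ile1 // => j /andP[Pj _]; exact: F01.
Qed.

(** * Types, values and equilibria *)

Section Game.
Variables (R : realType) (n : nat) (sig : Omega n -> 'I_4 -> info) (rho eps c : R).
Hypotheses (rho01 : 0 <= rho <= 1) (eps01 : 0 <= eps <= 1).

Definition gain (s : profile R) (i : 'I_4) (w : Omega n) : R :=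
  (if w.1 then \prod_(j < 4 | j != i) s j (sig w j) else 0) - c.

(* The expected gain of adopting on the event that agent [i] has type [t];
   up to the positive factor Pr[type t] it is the conditional gain. *)
Definition type_value (s : profile R) (i : 'I_4) (t : info) : R :=
  \sum_w prob rho eps w * ((sig w i == t)%:R * gain s i w).

Lemma sum_type_value s i (g : info -> R) :
  \sum_w prob rho eps w * g (sig w i) * gain s i w = \sum_t g t * type_value s i t.
Proof.
under [RHS]eq_bigr => t _ do rewrite /type_value mulr_sumr.
rewrite exchange_big /=; apply: eq_bigr => w _.
rewrite (bigD1 (sig w i)) //= eqxx big1 ?addr0 => [|t /negbTE].
  by rewrite mul1r mulrCA mulrA.
by rewrite eq_sym => ->; rewrite !(mul0r, mulr0).
Qed.

Lemma payoffE s i : payoff sig rho eps c s i = \sum_t s i t * type_value s i t.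
Proof. exact: sum_type_value. Qed.

Lemma payoff_updE s i f :
  payoff sig rho eps c (upd s i f) i = \sum_t f t * type_value s i t.
Proof.
rewrite -sum_type_value /payoff /gain /upd eqxx; apply: eq_bigr => w _.
congr (_ * _ * (_ - _)); case: w.1 => //.
by apply: eq_bigr => j /negbTE ->.
Qed.

Lemma BNE_type_value_lt0 s i t :
  is_BNE sig rho eps c s -> type_value s i t < 0 -> s i t = 0.
Proof.
move=> [s01 sBR] vt_lt0; have /andP[st0 st1] := s01 i t.
pose f t' := if t' == t then 0 else s i t'.
have f01 : valid_strategy f.
  by move=> t'; rewrite /f; case: eqP => _; [rewrite lexx ler01 | exact: s01].
have := sBR i f f01; rewrite payoff_updE payoffE.
rewrite (bigD1 t) //= [X in _ <= X](bigD1 t) //= /f eqxx mul0r add0r.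
under eq_bigr => t' /negbTE -> do [].
rewrite lerDr => st_vt; apply/eqP; rewrite eq_le st0 andbT; nra.
Qed.

Lemma BNE_of_best_responses s :
  (forall i, valid_strategy (s i)) ->
  (forall i t, (s i t = 1 /\ 0 <= type_value s i t) \/
               (s i t = 0 /\ type_value s i t <= 0)) ->
  is_BNE sig rho eps c s.
Proof.
move=> s01 sBR; split=> // i f f01.
rewrite payoff_updE payoffE; apply: ler_sum => t _; have /andP[f0 f1] := f01 t.
by case: (sBR i t) => -[-> vt]; nra.
Qed.

Lemma type_value_eq0 (s : profile R) (i : 'I_4) (t : info) :
  (forall w, sig w i != t) -> type_value s i t = 0.
Proof. by move=> nt; apply: big1 => w _; rewrite (negbTE (nt w)) mul0r mulr0. Qed.

Lemma type_value_le (s : profile R) (i : 'I_4) (t : info) (U : pred (Omega n)) :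
  (forall w : Omega n,
     w.1 -> sig w i = t -> \prod_(j < 4 | j != i) s j (sig w j) <= (U w)%:R) ->
  type_value s i t <= pr rho eps [pred w : Omega n | [&& w.1, U w & sig w i == t]] -
                      c * pr rho eps [pred w : Omega n | sig w i == t].
Proof.
move=> others_le; rewrite /pr mulr_sumr -sumrB; apply: ler_sum => w _.
rewrite [c * _]mulrCA -mulrBr ler_wpM2l ?prob_ge0 //=.
case: eqP => [wt|_] /=; last by rewrite !andbF mul0r mulr0 subrr.
rewrite !andbT mul1r mulr1 /gain lerD2r.
by case w1 : w.1 => //=; apply: others_le.
Qed.

Lemma type_value_ge (s : profile R) (i : 'I_4) (t : info) (L : pred (Omega n)) :
  (forall w : Omega n,
     w.1 -> sig w i = t -> (L w)%:R <= \prod_(j < 4 | j != i) s j (sig w j)) ->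
  pr rho eps [pred w : Omega n | [&& w.1, L w & sig w i == t]] -
    c * pr rho eps [pred w : Omega n | sig w i == t] <= type_value s i t.
Proof.
move=> others_ge; rewrite /pr mulr_sumr -sumrB; apply: ler_sum => w _.
rewrite [c * _]mulrCA -mulrBr ler_wpM2l ?prob_ge0 //=.
case: eqP => [wt|_] /=; last by rewrite !andbF mul0r mulr0 subrr.
rewrite !andbT mul1r mulr1 /gain lerD2r.
by case w1 : w.1 => //=; apply: others_ge.
Qed.

End Game.

(** * Event probabilities in the cycle *)

Section CycleArcs.
Variables (th : bool) (s : bitseq).
Let w : Omega 5 := (th, [ffun a : 'I_5 => nth false s a]).

Lemma cyc_r1_nth : cyc_r1 w = th && nth false s 0.
Proof. by rewrite /cyc_r1 ffunE. Qed.

Lemma cyc_r2_nth : cyc_r2 w = [&& th, nth false s 0 & nth false s 1].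
Proof. by rewrite /cyc_r2 cyc_r1_nth ffunE andbA. Qed.

Lemma cyc_r4_nth : cyc_r4 w = [&& th, nth false s 0 & nth false s 2].
Proof. by rewrite /cyc_r4 cyc_r1_nth ffunE andbA. Qed.

Lemma cyc_from2_nth : cyc_from2 w = [&& th, nth false s 0, nth false s 1 & nth false s 3].
Proof. by rewrite /cyc_from2 cyc_r2_nth ffunE !andbA. Qed.

Lemma cyc_from4_nth : cyc_from4 w = [&& th, nth false s 0, nth false s 2 & nth false s 4].
Proof. by rewrite /cyc_from4 cyc_r4_nth ffunE !andbA. Qed.

End CycleArcs.

Ltac cycle_pr_by_enumeration :=
  rewrite /pr sum_prob /cycle_sig /=
    ?(cyc_r1_nth, cyc_r2_nth, cyc_r4_nth, cyc_from2_nth, cyc_from4_nth) /= /arc_weight;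
  ring.

Section CycleProbabilities.
Variables (R : realType) (rho eps : R).

Lemma pr_cycle_uninformed1 :
  pr rho eps [pred w : Omega 5 | cycle_sig w agent1 == (false, false)] = 1 - rho + rho * eps.
Proof. cycle_pr_by_enumeration. Qed.

Lemma pr_cycle_good_uninformed1 :
  pr rho eps [pred w : Omega 5 | [&& w.1, true & cycle_sig w agent1 == (false, false)]] =
  rho * eps.
Proof. cycle_pr_by_enumeration. Qed.

Lemma pr_cycle_uninformed2 :
  pr rho eps [pred w : Omega 5 | cycle_sig w agent2 == (false, false)] =
  1 - rho * (1 - eps) ^+ 2.
Proof. cycle_pr_by_enumeration. Qed.

Lemma pr_cycle_good_uninformed2 :
  pr rho eps [pred w : Omega 5 | [&& w.1, cyc_r1 w & cycle_sig w agent2 == (false, false)]] =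
  rho * (1 - eps) * eps.
Proof. cycle_pr_by_enumeration. Qed.

Lemma pr_cycle_uninformed4 :
  pr rho eps [pred w : Omega 5 | cycle_sig w agent4 == (false, false)] =
  1 - rho * (1 - eps) ^+ 2.
Proof. cycle_pr_by_enumeration. Qed.

Lemma pr_cycle_good_uninformed4 :
  pr rho eps [pred w : Omega 5 | [&& w.1, cyc_r1 w & cycle_sig w agent4 == (false, false)]] =
  rho * (1 - eps) * eps.
Proof. cycle_pr_by_enumeration. Qed.

Lemma pr_cycle_only_from2 :
  pr rho eps [pred w : Omega 5 | cycle_sig w agent3 == (true, false)] =
  rho * (1 - eps) ^+ 3 * (1 - (1 - eps) ^+ 2).
Proof. cycle_pr_by_enumeration. Qed.

Lemma pr_cycle_good_only_from2 :
  pr rho eps [pred w : Omega 5 | [&& w.1, cyc_r4 w & cycle_sig w agent3 == (true, false)]] =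
  rho * (1 - eps) ^+ 4 * eps.
Proof. cycle_pr_by_enumeration. Qed.

Lemma pr_cycle_only_from4 :
  pr rho eps [pred w : Omega 5 | cycle_sig w agent3 == (false, true)] =
  rho * (1 - eps) ^+ 3 * (1 - (1 - eps) ^+ 2).
Proof. cycle_pr_by_enumeration. Qed.

Lemma pr_cycle_good_only_from4 :
  pr rho eps [pred w : Omega 5 | [&& w.1, cyc_r2 w & cycle_sig w agent3 == (false, true)]] =
  rho * (1 - eps) ^+ 4 * eps.
Proof. cycle_pr_by_enumeration. Qed.

Lemma pr_cycle_informed1 :
  pr rho eps [pred w : Omega 5 | cycle_sig w agent1 == (true, false)] = rho * (1 - eps).
Proof. cycle_pr_by_enumeration. Qed.

Lemma pr_cycle_good_informed1_reports_agree :
  pr rho eps [pred w : Omega 5 |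
    [&& w.1, cyc_from2 w == cyc_from4 w & cycle_sig w agent1 == (true, false)]] =
  rho * (1 - eps) * ((1 - eps) ^+ 4 + (1 - (1 - eps) ^+ 2) ^+ 2).
Proof. cycle_pr_by_enumeration. Qed.

End CycleProbabilities.

(** * Event probabilities in the line *)

Lemma line_recv_nth th (s : bitseq) (i : 'I_4) : size s = 4 ->
  line_recv (th, [ffun a : 'I_4 => nth false s a]) i = th && all id (take i.+1 s).
Proof.
move=> s4; rewrite /line_recv /=; congr andb; have i_s : (i.+1 <= size s)%N by rewrite s4.
apply/forallP/(all_nthP false) => [recv k | recv x].
  rewrite size_takel // => k_i; have k4 : (k < 4)%N by apply: leq_trans k_i (ltn_ord i).
  by have := recv (Ordinal k4); rewrite ffunE /= -ltnS k_i nth_take.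
apply/implyP => x_i; have := recv x.
by rewrite ffunE size_takel // nth_take ?ltnS //; apply.
Qed.

Lemma line_recv_mono w (j k : 'I_4) : line_recv w k -> (j <= k)%N -> line_recv w j.
Proof.
rewrite /line_recv => /andP[-> /forallP recv_k] j_k /=.
apply/forallP => a; apply/implyP => a_j.
by apply: (implyP (recv_k a)); apply: leq_trans j_k.
Qed.

Ltac line_pr_by_enumeration :=
  rewrite /pr sum_prob /line_sig /= ?line_recv_nth //= /arc_weight; ring.

Section LineProbabilities.
Variables (R : realType) (rho eps : R).

Lemma pr_line_recv (i : 'I_4) :
  pr rho eps (fun w => line_recv w i) = rho * (1 - eps) ^+ i.+1.
Proof. by case: i => -[|[|[|[|//]]]] i_lt; line_pr_by_enumeration. Qed.

Lemma pr_line_uninformed4 :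
  pr rho eps [pred w : Omega 4 | line_sig w agent4 == (false, false)] =
  1 - rho * (1 - eps) ^+ 4.
Proof. line_pr_by_enumeration. Qed.

Lemma pr_line_good_pivotal4 :
  pr rho eps [pred w : Omega 4 |
    [&& w.1, line_recv w agent3 & line_sig w agent4 == (false, false)]] =
  rho * (1 - eps) ^+ 3 * eps.
Proof. line_pr_by_enumeration. Qed.

Lemma pr_line_informed (i : 'I_4) :
  pr rho eps [pred w : Omega 4 | line_sig w i == (true, false)] = rho * (1 - eps) ^+ i.+1.
Proof.
rewrite -pr_line_recv; apply: eq_pr => w.
by rewrite /= /line_sig xpair_eqE eqxx andbT eqb_id.
Qed.

Lemma pr_line_good_all_informed (i : 'I_4) :
  pr rho eps [pred w : Omega 4 |
    [&& w.1, line_recv w agent4 & line_sig w i == (true, false)]] =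
  rho * (1 - eps) ^+ 4.
Proof.
rewrite -(pr_line_recv agent4); apply: eq_pr => w /=.
case r4: (line_recv w agent4); last by rewrite andbF.
by move: (r4) => /andP[-> _]; rewrite /line_sig (line_recv_mono r4) // -ltnS.
Qed.

End LineProbabilities.

(** * Equilibria for costs in the window *)

Definition informed_adopt (R : realType) : profile R := fun _ t => t.1%:R.

Section CostWindow.
Variables (R : realType) (rho eps c : R).
Hypotheses (rho_gt0 : 0 < rho) (rho_lt1 : rho < 1) (eps_gt0 : 0 < eps)
  (eps_small : eps < (1 - rho) / 8)
  (c_gt : (1 - eps) ^+ 4 + 4 * eps ^+ 2 < c) (c_lt : c < (1 - eps) ^+ 3).

Lemma rho01 : 0 <= rho <= 1.
Proof. by rewrite !ltW. Qed.

Lemma eps_lt : eps < 1 / 8.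
Proof. by move: eps_small rho_gt0; lra. Qed.

Lemma eps01 : 0 <= eps <= 1.
Proof. by rewrite ltW //=; move: eps_lt; lra. Qed.

Lemma one_sub_eps_exp01 k : 0 <= (1 - eps) ^+ k <= 1.
Proof. by case/andP: eps01 => ? ?; rewrite exprn_ge0 ?exprn_ile1 //; lra. Qed.

Lemma half_lt_c : 1 / 2 < c.
Proof.
move: c_gt eps_lt (sqr_ge0 eps); set x := 1 - eps.
have -> : x ^+ 4 = x ^+ 2 * x ^+ 2 by rewrite -exprD.
rewrite expr2 /x; nra.
Qed.

Lemma rho_eps_lt : rho * eps < c * (1 - rho).
Proof. by move: half_lt_c eps_small rho_gt0 rho_lt1 eps_gt0; nra. Qed.

(* The shape of the value of an uninformed type: the good state together with
   adoption by all others has probability O(eps), the type itself probability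
   at least [1 - rho]. *)
Lemma uninformed_value_lt0 y z :
  0 <= y <= 1 -> 0 <= z <= 1 -> rho * y * eps - c * (1 - rho * z) < 0.
Proof.
move=> /andP[y0 y1] /andP[z0 z1].
have c0 : 0 <= c by move: half_lt_c; lra.
have re0 : 0 <= rho * eps by apply: mulr_ge0; exact: ltW.
have rz : 0 <= rho * (1 - z) by apply: mulr_ge0; [exact: ltW | rewrite subr_ge0].
by move: rho_eps_lt; nra.
Qed.

Section CycleEquilibrium.
Variable s : profile R.
Hypothesis s_BNE : is_BNE cycle_sig rho eps c s.

Lemma cycle_others_le w (i k : 'I_4) :
  k != i -> \prod_(j < 4 | j != i) s j (cycle_sig w j) <= s k (cycle_sig w k).
Proof. by move=> ki; apply: prodr_le_factor => // j _; exact: s_BNE.1. Qed.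

Lemma adopt_le_indicator j t (b : bool) : (b = false -> s j t = 0) -> s j t <= b%:R.
Proof. by case: b => [_ | -> //]; case/andP: (s_BNE.1 j t). Qed.

Lemma cycle_uninformed1 : s agent1 (false, false) = 0.
Proof.
apply: (BNE_type_value_lt0 s_BNE).
apply: le_lt_trans (type_value_le c rho01 eps01 (U := xpredT) _) _.
  by move=> w _ _; apply: prodr_ile1 => j _; exact: s_BNE.1.
rewrite pr_cycle_good_uninformed1 pr_cycle_uninformed1.
have -> : 1 - rho + rho * eps = 1 - rho * (1 - eps) by ring.
rewrite -{1}(mulr1 rho) uninformed_value_lt0 ?ler01 ?lexx //.
by rewrite -(expr1 (1 - eps)) one_sub_eps_exp01.
Qed.

Lemma cycle_uninformed2 : s agent2 (false, false) = 0.
Proof.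
apply: (BNE_type_value_lt0 s_BNE).
apply: le_lt_trans (type_value_le c rho01 eps01 (U := cyc_r1) _) _.
  move=> w _ _; apply: le_trans (cycle_others_le w (k := agent1) _) _ => //.
  by apply: adopt_le_indicator; rewrite /cycle_sig /= => ->; exact: cycle_uninformed1.
rewrite pr_cycle_good_uninformed2 pr_cycle_uninformed2.
by rewrite uninformed_value_lt0 // -(expr1 (1 - eps)) one_sub_eps_exp01.
Qed.

Lemma cycle_uninformed4 : s agent4 (false, false) = 0.
Proof.
apply: (BNE_type_value_lt0 s_BNE).
apply: le_lt_trans (type_value_le c rho01 eps01 (U := cyc_r1) _) _.
  move=> w _ _; apply: le_trans (cycle_others_le w (k := agent1) _) _ => //.
  by apply: adopt_le_indicator; rewrite /cycle_sig /= => ->; exact: cycle_uninformed1.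
rewrite pr_cycle_good_uninformed4 pr_cycle_uninformed4.
by rewrite uninformed_value_lt0 // -(expr1 (1 - eps)) one_sub_eps_exp01.
Qed.

(* Hearing from one neighbour only, agent 3 is pivotal with conditional
   probability [(1 - eps) / (2 - eps) < 1 / 2 < c]. *)
Lemma single_report_value_lt0 :
  rho * (1 - eps) ^+ 4 * eps - c * (rho * (1 - eps) ^+ 3 * (1 - (1 - eps) ^+ 2)) < 0.
Proof.
have -> : rho * (1 - eps) ^+ 4 * eps - c * (rho * (1 - eps) ^+ 3 * (1 - (1 - eps) ^+ 2)) =
          rho * (1 - eps) ^+ 3 * eps * ((1 - eps) - c * (2 - eps)) by ring.
have x3_gt0 : 0 < (1 - eps) ^+ 3 by rewrite exprn_gt0 // subr_gt0; move: eps_lt; lra.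
rewrite pmulr_rlt0 ?mulr_gt0 //; by move: half_lt_c eps_gt0 eps_lt; nra.
Qed.

Lemma cycle_only_from2 : s agent3 (true, false) = 0.
Proof.
apply: (BNE_type_value_lt0 s_BNE).
apply: le_lt_trans (type_value_le c rho01 eps01 (U := cyc_r4) _) _.
  move=> w _ _; apply: le_trans (cycle_others_le w (k := agent4) _) _ => //.
  by apply: adopt_le_indicator; rewrite /cycle_sig /= => ->; exact: cycle_uninformed4.
by rewrite pr_cycle_good_only_from2 pr_cycle_only_from2 single_report_value_lt0.
Qed.

Lemma cycle_only_from4 : s agent3 (false, true) = 0.
Proof.
apply: (BNE_type_value_lt0 s_BNE).
apply: le_lt_trans (type_value_le c rho01 eps01 (U := cyc_r2) _) _.
  move=> w _ _; apply: le_trans (cycle_others_le w (k := agent2) _) _ => //.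
  by apply: adopt_le_indicator; rewrite /cycle_sig /= => ->; exact: cycle_uninformed2.
by rewrite pr_cycle_good_only_from4 pr_cycle_only_from4 single_report_value_lt0.
Qed.

Lemma cycle_informed1 : s agent1 (true, false) = 0.
Proof.
apply: (BNE_type_value_lt0 s_BNE).
apply: le_lt_trans
  (type_value_le c rho01 eps01 (U := fun w => cyc_from2 w == cyc_from4 w) _) _.
  move=> w _ _; apply: le_trans (cycle_others_le w (k := agent3) _) _ => //.
  apply: adopt_le_indicator; rewrite /cycle_sig /=.
  case: (cyc_from2 w); case: (cyc_from4 w) => // _.
  - exact: cycle_only_from2.
  - exact: cycle_only_from4.
rewrite pr_cycle_good_informed1_reports_agree pr_cycle_informed1.
have -> : 1 - (1 - eps) ^+ 2 = eps * (2 - eps) by ring.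
have x_gt0 : 0 < 1 - eps by move: eps_lt; lra.
rewrite [c * _]mulrC -mulrBr pmulr_rlt0 ?mulr_gt0 // subr_lt0; apply: le_lt_trans c_gt.
rewrite lerD2l exprMn mulrC ler_wpM2r ?sqr_ge0 // expr2; move: eps_gt0 eps_lt; nra.
Qed.

Lemma cycle_all_adopt_eq0 : prob_all_adopt cycle_sig rho eps s = 0.
Proof.
apply: big1 => w _; rewrite (bigD1 agent1) //=.
have -> : s agent1 (cycle_sig w agent1) = 0.
  rewrite /cycle_sig /=; case: (cyc_r1 w).
  - exact: cycle_informed1.
  - exact: cycle_uninformed1.
by rewrite mul0r mulr0.
Qed.

End CycleEquilibrium.

Lemma line_informed_value_ge0 i :
  0 <= type_value line_sig rho eps c (informed_adopt R) i (true, false).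
Proof.
apply: le_trans
  (type_value_ge c rho01 eps01 (L := fun w => line_recv w agent4) _); last first.
  move=> w _ _; case r4: (line_recv w agent4) => /=.
    by rewrite big1 // => j _; rewrite /informed_adopt /= (line_recv_mono r4) // -ltnS.
  by apply: prodr_ge0 => j _; rewrite ler0n.
rewrite pr_line_good_all_informed pr_line_informed.
have -> : (1 - eps) ^+ 4 = (1 - eps) ^+ i.+1 * (1 - eps) ^+ (3 - i).
  by rewrite -exprD addSn subnKC // -ltnS.
have -> : forall x y, rho * (x * y) - c * (rho * x) = rho * x * (y - c) by move=> x y; ring.
have c_le : c <= (1 - eps) ^+ (3 - i).
  apply/ltW/(lt_le_trans c_lt); case/andP: eps01 => ? ?.
  by apply: ler_wiXn2l; rewrite ?leq_subr //; lra.
have /andP[xi_ge0 _] := one_sub_eps_exp01 i.+1.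
by rewrite mulr_ge0 ?subr_ge0 // mulr_ge0 // ltW.
Qed.

Lemma line_uninformed_value_le0 i :
  type_value line_sig rho eps c (informed_adopt R) i (false, false) <= 0.
Proof.
have ind01 j w : 0 <= informed_adopt R j (line_sig w j) <= 1.
  by rewrite /informed_adopt ler0n lern1 leq_b1.
have [->|i4] := eqVneq i agent4.
  apply: le_trans (type_value_le c rho01 eps01 (U := fun w => line_recv w agent3) _) _.
    by move=> w _ _; apply: (prodr_le_factor (k := agent3)) => // j _; exact: ind01.
  rewrite pr_line_good_pivotal4 pr_line_uninformed4.
  by apply: ltW; apply: uninformed_value_lt0; exact: one_sub_eps_exp01.
apply: le_trans (type_value_le c rho01 eps01 (U := fun w => line_recv w agent4) _) _.
  move=> w _ _; apply: (prodr_le_factor (k := agent4)) => [j _|].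
  - exact: ind01.
  - by rewrite eq_sym.
rewrite pr_pred0 ?sub0r ?oppr_le0.
  by rewrite mulr_ge0 ?(pr_ge0 rho01 eps01) //; move: half_lt_c; lra.
move=> w /=; case r4: (line_recv w agent4); rewrite ?andbF //.
by rewrite /line_sig (line_recv_mono r4) /= ?andbF // -ltnS.
Qed.

Lemma line_BNE : is_BNE line_sig rho eps c (informed_adopt R).
Proof.
have never_true2 i b : type_value line_sig rho eps c (informed_adopt R) i (b, true) = 0.
  by apply: type_value_eq0 => w; rewrite /line_sig xpair_eqE /= andbF.
apply: BNE_of_best_responses => [i t | i [[] []]].
- by rewrite /informed_adopt ler0n lern1 leq_b1.
- by left; rewrite never_true2.
- by left; split => //; exact: line_informed_value_ge0.
- by right; rewrite never_true2.
- by right; split => //; exact: line_uninformed_value_le0.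
Qed.

Lemma line_all_adopt :
  prob_all_adopt line_sig rho eps (informed_adopt R) = rho * (1 - eps) ^+ 4.
Proof.
rewrite -(pr_line_recv _ _ agent4); apply: eq_bigr => w _; congr (_ * _).
case r4: (line_recv w agent4) => /=.
  by rewrite big1 // => j _; rewrite /informed_adopt /= (line_recv_mono r4) // -ltnS.
by rewrite (bigD1 agent4) //= {1}/informed_adopt /= r4 mul0r.
Qed.

End CostWindow.

Lemma cost_window_nonempty (R : realType) (eps : R) :
  0 < eps -> eps < 1 / 8 -> (1 - eps) ^+ 4 + 4 * eps ^+ 2 < (1 - eps) ^+ 3.
Proof.
move=> eps_gt0 eps_lt; rewrite -subr_gt0.
have -> : (1 - eps) ^+ 3 - ((1 - eps) ^+ 4 + 4 * eps ^+ 2) =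
          eps * ((1 - eps) ^+ 3 - 4 * eps) by ring.
rewrite mulr_gt0 // subr_gt0.
have -> : (1 - eps) ^+ 3 = 1 - 3 * eps + eps ^+ 2 * (3 - eps) by ring.
have : 0 <= eps ^+ 2 * (3 - eps) by rewrite mulr_ge0 ?sqr_ge0 // subr_ge0; lra.
lra.
Qed.

Theorem mainTheorem9 (R : realType) (rho : R) :
  0 < rho < 1 ->
  exists eps0 : R, 0 < eps0 /\
    forall eps : R, 0 < eps -> eps < 1 -> eps < eps0 ->
      exists a b : R, 0 <= a /\ a < b /\ b <= 1 /\
        forall c : R, a < c < b ->
          exists s : profile R,
            is_BNE line_sig rho eps c s /\
            forall s' : profile R, is_BNE cycle_sig rho eps c s' ->
              prob_all_adopt cycle_sig rho eps s' < prob_all_adopt line_sig rho eps s.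
Proof.
move=> /andP[rho_gt0 rho_lt1].
exists ((1 - rho) / 8); split; first by move: rho_lt1; lra.
move=> eps eps_gt0 _ eps_small.
have eps_lt : eps < 1 / 8 by move: eps_small rho_gt0; lra.
have /andP[x_ge0 x_le1] : 0 <= 1 - eps <= 1 by apply/andP; split; lra.
exists ((1 - eps) ^+ 4 + 4 * eps ^+ 2), ((1 - eps) ^+ 3).
split; first by apply: addr_ge0; [exact: exprn_ge0 | rewrite mulr_ge0 ?sqr_ge0 ?ler0n].
split; first exact: cost_window_nonempty.
split; first exact: exprn_ile1.
move=> c /andP[c_gt c_lt]; exists (informed_adopt R); split; first by apply: line_BNE.
move=> s s_BNE; have -> : prob_all_adopt cycle_sig rho eps s = 0.
  by apply: cycle_all_adopt_eq0 s_BNE.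
by rewrite line_all_adopt mulr_gt0 // exprn_gt0 //; move: eps_lt; lra.
Qed.
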